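(* Let $(V,\sigma,\kappa,\alpha)$ be a symplectic cubic space over $\mathbb F_2$ with basis $b_1,\ldots,b_n$ and structure constants $\sigma_i=\sigma(b_i)$, $\kappa_{ij}=\kappa(b_i,b_j)$, $\alpha_{ijk}=\alpha(b_i,b_j,b_k)$. Let $G$ be the group with generators $g_i,f_i,h_i$ ($1\le i\le n$), $u$, $v$ and defining relations $g_i^2=u^{\sigma_i}$, $f_i^2=v^{\sigma_i}$, $h_i^2=u^2=v^2=1$; $[g_i,g_j]=u^{\kappa_{ij}}$, $[f_i,f_j]=v^{\kappa_{ij}}$; $[g_i,f_j]=(uv)^{\kappa_{ij}}\prod_{k=1}^n h_k^{\alpha_{ijk}}$; $[g_i,h_j]=u^{\delta_{ij}}$, $[f_i,h_j]=v^{\delta_{ij}}$; $[h_i,h_j]=[g_i,u]=[f_i,u]=[h_i,u]=[g_i,v]=[f_i,v]=[h_i,v]=1$. Then the assignments $\sigma: g_i\mapsto f_i,\ f_i\mapsto g_i,\ h_i\mapsto h_i,\ u\mapsto v,\ v\mapsto u$ and $\rho: g_i\mapsto f_i,\ f_i\mapsto (g_if_i)^{-1},\ h_i\mapsto h_i,\ u\mapsto v,\ v\mapsto uv$ extend to automorphisms of $G$. Moreover $\sigma^2=\rho^3=(\sigma\rho)^2=\mathrm{id}$, so $S=\langle\sigma,\rho\rangle$ is isomorphic to the symmetric group $S_3$.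
   Context: A symplectic cubic space is a vector space $V$ over $\mathbb F_2$ with maps $\sigma:V\to\mathbb F_2$, $\kappa:V\times V\to\mathbb F_2$, $\alpha:V\times V\times V\to\mathbb F_2$ satisfying $\sigma(x+y)=\sigma(x)+\sigma(y)+\kappa(x,y)$, $\kappa(x+y,z)=\kappa(x,z)+\kappa(y,z)+\alpha(x,y,z)$, $\alpha(x+y,z,t)=\alpha(x,z,t)+\alpha(y,z,t)$. Exponents in $\mathbb F_2$ are read as $0$ or $1$; $[a,b]=a^{-1}b^{-1}ab$; $\delta_{ij}$ is the Kronecker delta. *)

From HB Require Import structures.
From mathcomp Require Import all_boot all_order all_algebra all_fingroup.
Set Implicit Arguments. Unset Strict Implicit. Unset Printing Implicit Defensive.
Import GRing.Theory.

Definition ex (c : 'F_2) : nat := nat_of_ord c.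

Definition symplectic_cubic (V : vectType 'F_2) (sg : V -> 'F_2)
    (ka : V -> V -> 'F_2) (al : V -> V -> V -> 'F_2) : Prop :=
  [/\ (forall x y, sg (x + y) = sg x + sg y + ka x y)%R,
      (forall x y z, ka (x + y) z = ka x z + ka y z + al x y z)%R &
      (forall x y z t, al (x + y) z t = al x z t + al y z t)%R].

Local Open Scope group_scope.

Definition G_rels (gT : finGroupType) (n : nat) (s : 'I_n -> 'F_2)
    (k : 'I_n -> 'I_n -> 'F_2) (a : 'I_n -> 'I_n -> 'I_n -> 'F_2)
    (g f h : 'I_n -> gT) (u v : gT) : Prop :=
  [/\ (forall i, g i ^+ 2 = u ^+ ex (s i)) /\ (forall i, f i ^+ 2 = v ^+ ex (s i)),
      (forall i, h i ^+ 2 = 1) /\ u ^+ 2 = 1 /\ v ^+ 2 = 1,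
      (forall i j, [~ g i, g j] = u ^+ ex (k i j)) /\
      (forall i j, [~ f i, f j] = v ^+ ex (k i j)) /\
      (forall i j, [~ g i, f j] = (u * v) ^+ ex (k i j) * \prod_(l < n) h l ^+ ex (a i j l)),
      (forall i j, [~ g i, h j] = u ^+ (i == j)) /\
      (forall i j, [~ f i, h j] = v ^+ (i == j)) &
      (forall i j, [~ h i, h j] = 1) /\
      (forall i, [~ g i, u] = 1 /\ [~ f i, u] = 1 /\ [~ h i, u] = 1 /\
                 [~ g i, v] = 1 /\ [~ f i, v] = 1 /\ [~ h i, v] = 1)].

Definition G_gens (gT : finGroupType) (n : nat) (g f h : 'I_n -> gT) (u v : gT)
  : {set gT} :=
  [set g i | i : 'I_n] :|: [set f i | i : 'I_n] :|: [set h i | i : 'I_n] :|: [set u; v].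

(* G is the group presented by the generators g_i, f_i, h_i, u, v and the
   relations G_rels: the relations hold, G is generated by these elements,
   and any family of elements satisfying the relations in any (finite)
   group is the image of the generators under a morphism defined on G. *)
Definition presented_G (gT : finGroupType) (G : {group gT}) (n : nat)
    (s : 'I_n -> 'F_2) (k : 'I_n -> 'I_n -> 'F_2) (a : 'I_n -> 'I_n -> 'I_n -> 'F_2)
    (g f h : 'I_n -> gT) (u v : gT) : Prop :=
  [/\ G_rels s k a g f h u v,
      G = <<G_gens g f h u v>> :> {set gT} &
      forall (hT : finGroupType) (g' f' h' : 'I_n -> hT) (u' v' : hT),
        G_rels s k a g' f' h' u' v' ->
        exists phi : {morphism G >-> hT},
          [/\ forall i, phi (g i) = g' i, forall i, phi (f i) = f' i,
              forall i, phi (h i) = h' i, phi u = u' & phi v = v']].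

(* The identities of a symplectic cubic space make kappa symmetric and
   alternating, and alpha symmetric in its first two arguments and zero as soon
   as an argument is repeated.  With these facts, commutator calculus (u and v
   are central involutions, and the product of the h_l ^ alpha_ijl commutes with
   g_m and f_m whenever alpha_ijm = 0) shows that the images of the generators
   under sigma and rho satisfy the defining relations again.  The universal
   property extends both to endomorphisms of G; as sigma^2 and rho^3 fix all
   generators they are automorphisms, and (sigma rho)^2 = 1 is checked on
   generators as well.  Neither is trivial, since G maps onto Z/2 with
   g_i |-> 1 and f_i |-> 0.  Finally an involution x and an element y of order 3
   with (xy)^2 = 1 generate a dihedral group of order 6, that is S_3. *)

From HB Require Import structures.
From mathcomp Require Import all_boot all_order all_algebra all_fingroup.
From mathcomp Require Import all_solvable ring.
Set Implicit Arguments. Unset Strict Implicit. Unset Printing Implicit Defensive.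
Import GRing.Theory.

(** * Consequences of the symplectic cubic identities *)

Section SymplecticCubic.
Local Open Scope ring_scope.

Lemma F2_addxx (c : 'F_2) : c + c = 0.
Proof. by case: c => [[|[|//]] ?]; apply/val_inj. Qed.

Lemma F2_two : 2%:R = 0 :> 'F_2.
Proof. exact: F2_addxx. Qed.

Lemma F2_lmod_addxx (V : lmodType 'F_2) (x : V) : x + x = 0.
Proof. by rewrite -[x]scale1r -scalerDl F2_addxx scale0r. Qed.

Variables (V : vectType 'F_2) (sg : V -> 'F_2) (ka : V -> V -> 'F_2)
  (al : V -> V -> V -> 'F_2).
Hypothesis scV : symplectic_cubic sg ka al.

Lemma kaE x y : ka x y = sg (x + y) + sg x + sg y.
Proof. by case: scV => sgD _ _; rewrite sgD; ring: F2_two. Qed.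

Lemma alE x y z : al x y z = ka (x + y) z + ka x z + ka y z.
Proof. by case: scV => _ kaD _; rewrite kaD; ring: F2_two. Qed.

Lemma al0 z t : al 0 z t = 0.
Proof.
case: scV => _ _ /(_ 0 0 z t); rewrite addr0 => E.
by rewrite {1}E F2_addxx.
Qed.

Lemma ka0 z : ka 0 z = 0.
Proof.
case: scV => _ /(_ 0 0 z); rewrite addr0 al0 addr0 => E.
by rewrite {1}E F2_addxx.
Qed.

Lemma sg0 : sg 0 = 0.
Proof.
case: scV => /(_ 0 0); rewrite addr0 ka0 addr0 => E _ _.
by rewrite {1}E F2_addxx.
Qed.

Lemma ka_sym x y : ka x y = ka y x.
Proof. by rewrite !kaE (addrC y x); ring. Qed.

Lemma ka_diag x : ka x x = 0.
Proof. by rewrite kaE F2_lmod_addxx sg0 -addrA F2_addxx addr0. Qed.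

Lemma al_sym x y z : al x y z = al y x z.
Proof. by rewrite !alE (addrC y x); ring. Qed.

Lemma al_diag x z : al x x z = 0.
Proof. by rewrite alE F2_lmod_addxx ka0 -addrA F2_addxx addr0. Qed.

Lemma ka_addKl x y : ka (x + y) x = ka y x.
Proof. by rewrite !kaE (addrAC x y x) F2_lmod_addxx add0r (addrC y); ring. Qed.

Lemma al_xyx x y : al x y x = 0.
Proof. by rewrite alE ka_addKl ka_diag addr0 F2_addxx. Qed.

Lemma al_xyy x y : al x y y = 0.
Proof. by rewrite al_sym al_xyx. Qed.

End SymplecticCubic.

Local Open Scope group_scope.

(** * Involutions, commutators and the dihedral group of order 6 *)

Section GroupFacts.
Variable gT : finGroupType.
Implicit Types x y z : gT.

Lemma invg_involution x : x ^+ 2 = 1 -> x^-1 = x.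
Proof. by move=> x2; apply/eqP; rewrite eq_invg_mul -[x * x]/(x ^+ 2) x2. Qed.

Lemma involutionX x e : x ^+ 2 = 1 -> (x ^+ e) ^+ 2 = 1.
Proof. by move=> x2; rewrite expgAC x2 expg1n. Qed.

Lemma commute_commg z x y : commute z x -> commute z y -> commute z [~ x, y].
Proof.
move=> czx czy; rewrite /commg /conjg.
by do !apply: commuteM => //; apply: commuteV.
Qed.

Lemma prod_involutions (I : Type) (r : seq I) (F : I -> gT) :
    (forall i j, commute (F i) (F j)) -> (forall i, F i ^+ 2 = 1) ->
  (\prod_(i <- r) F i) ^+ 2 = 1.
Proof.
move=> cF F2; elim: r => [|i r IHr]; first by rewrite big_nil expg1n.
rewrite big_cons expgMn ?F2 ?IHr ?mulg1 //.
by apply: commute_prod => j _; apply: cF.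
Qed.

Lemma commuteMl x y z : commute x z -> commute y z -> commute (x * y) z.
Proof. by move=> cxz cyz; apply/commute_sym/commuteM; apply: commute_sym. Qed.

Lemma commuteXl x z e : commute x z -> commute (x ^+ e) z.
Proof. by move=> cxz; apply/commute_sym/commuteX/commute_sym. Qed.

Lemma conjg_commute x y : commute x y -> x ^ y = x.
Proof. by move/commgP/conjg_fixP. Qed.

Lemma expg_involutionK x y e :
  x ^+ 2 = 1 -> x ^+ e * (x ^+ e * y) = y.
Proof.
by move=> x2; rewrite mulgA -[x ^+ e * x ^+ e]/((x ^+ e) ^+ 2) involutionX // mul1g.
Qed.

Lemma mulKg_involution x y : commute x y -> y ^+ 2 = 1 -> y * (x * y) = x.
Proof. by move=> cxy y2; rewrite mulgA -cxy -mulgA -[y * y]/(y ^+ 2) y2 mulg1. Qed.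

Lemma order_prime_exp x p : prime p -> x ^+ p = 1 -> x != 1 -> #[x] = p.
Proof.
move=> pr_p xp x1; apply/(prime_nt_dvdP pr_p); first by rewrite order_eq1.
by rewrite order_dvdn xp.
Qed.

Lemma gen_set2_mulr x y : <<[set x; x * y]>> = <<[set x; y]>>.
Proof.
have gen_l z t : z \in <<[set z; t]>> by apply/mem_gen/set21.
have gen_r z t : t \in <<[set z; t]>> by apply/mem_gen/set22.
apply/eqP; rewrite eqEsubset !gen_subG !subUset !sub1set !gen_l groupM ?gen_r //=.
by rewrite -{1}(mulKg x y) groupM ?groupV ?gen_l ?gen_r.
Qed.

Lemma gen_involutions_isog_D6 x y :
    x ^+ 2 = 1 -> y ^+ 2 = 1 -> (x * y) ^+ 3 = 1 -> x != 1 -> x * y != 1 ->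
  <<[set x; y]>> \isog 'D_6.
Proof.
move=> x2 y2 xy3 x1 xy1; rewrite isogEcard (@card_dihedral 3) //.
have -> : <<[set x; y]>> \homg 'D_6.
  rewrite (Grp'_dihedral (q := 3)) //; apply/existsP; exists (x, y).
  by rewrite /= !xpair_eqE joing_idl joing_idr x2 y2 xy3 !eqxx.
have dvd_ord z : z \in <<[set x; y]>> -> #[z] %| #|<<[set x; y]>>| by apply: order_dvdG.
have ox : #[x] = 2 by apply: order_prime_exp.
have oxy : #[x * y] = 3 by apply: order_prime_exp.
apply: dvdn_leq; first exact: cardG_gt0.
rewrite (@Gauss_dvd 2 3) // -{1}ox -oxy !dvd_ord ?groupM ?mem_gen ?set21 ?set22 //.
Qed.

End GroupFacts.

Lemma S3_isog_D6 : [set: 'S_3] \isog 'D_6.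
Proof.
pose o1 : 'I_3 := Ordinal (isT : 1 < 3).
pose t01 : 'S_3 := tperm ord0 o1; pose t12 : 'S_3 := tperm o1 ord_max.
have t01_neq1 : t01 != 1.
  by apply/eqP => /permP/(_ ord0); rewrite perm1 tpermL => /(congr1 val).
have t01t12_neq1 : t01 * t12 != 1.
  by apply/eqP => /permP/(_ ord0); rewrite permM perm1 !tpermL => /(congr1 val).
have t01t12_3 : (t01 * t12) ^+ 3 = 1.
  apply/permP => i; rewrite permX /= !permM perm1 /t01 /t12 /tperm !permE.
  by case: i => [[|[|[|//]]] ?]; apply/val_inj.
have D6 := gen_involutions_isog_D6 (tperm2 _ _) (tperm2 _ _) t01t12_3 t01_neq1 t01t12_neq1.
suff -> : [set: 'S_3] = <<[set t01; t12]>> by [].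
apply/eqP; rewrite eq_sym eqEcard subsetT cardsT card_Sn (card_isog D6) (@card_dihedral 3) //.
Qed.

Lemma gen_S3_relations_isog (gT : finGroupType) (x y : gT) :
    x ^+ 2 = 1 -> y ^+ 3 = 1 -> (x * y) ^+ 2 = 1 -> x != 1 -> y != 1 ->
  <<[set x; y]>> \isog [set: 'S_3].
Proof.
move=> x2 y3 xy2 x1 y1; rewrite -gen_set2_mulr.
have xxy : x * (x * y) = y by rewrite mulgA -[x * x]/(x ^+ 2) x2 mul1g.
apply: isog_trans (isog_symr S3_isog_D6).
by apply: gen_involutions_isog_D6; rewrite ?xxy.
Qed.

Lemma Zp_reflections_product_order N : 1 < N ->
  exists x y : {perm 'Z_N}, [/\ x ^+ 2 = 1, y ^+ 2 = 1 & N <= #[x * y]].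
Proof.
move=> N_gt1; have negK : involutive (fun z : 'Z_N => - z)%R by move=> z; rewrite opprK.
have subK : involutive (fun z : 'Z_N => 1 - z)%R by move=> z; rewrite opprB addrC subrK.
pose x := perm (inv_inj negK); pose y := perm (inv_inj subK).
have xE z : x z = (- z)%R by rewrite permE.
have yE z : y z = (1 - z)%R by rewrite permE.
exists x, y; split.
- by apply/permP => z; rewrite permX /= !xE perm1 opprK.
- by apply/permP => z; rewrite permX /= !yE perm1 subK.
have xyX (m : nat) : ((x * y) ^+ m) 0%R = (m%:R)%R.
  elim: m => [|m IHm]; first by rewrite expg0 perm1.
  by rewrite expgSr permM IHm permM xE yE opprK addrC -mulrSr.
apply: dvdn_leq; first exact: order_gt0.
by rewrite /dvdn -val_Zp_nat // -xyX expg_order perm1.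
Qed.

(** * Automorphisms of a group given by generators *)

Section AutomorphismsOfGeneratedGroup.
Variables (gT : finGroupType) (G : {group gT}) (A : {set gT}).
Hypothesis genG : G = <<A>> :> {set gT}.

Lemma morphic_fix_gen (F : gT -> gT) :
  {in G &, {morph F : x y / x * y}} -> {in A, F =1 id} -> {in G, F =1 id}.
Proof.
move=> FM FA; have F1 : F 1 = 1.
  by apply: (mulgI (F 1)); rewrite -FM ?group1 // !mulg1.
have fixF : group_set [set x in G | F x == x].
  apply/group_setP; split=> [|x y]; first by rewrite inE group1 F1 eqxx.
  by rewrite !inE => /andP[Gx /eqP Fx] /andP[Gy /eqP Fy]; rewrite groupM // FM // Fx Fy eqxx.
have /subsetP sGfix : G \subset Group fixF.
  rewrite {1}genG gen_subG; apply/subsetP => x Ax.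
  by rewrite inE FA // eqxx andbT genG mem_gen.
by move=> x /sGfix; rewrite inE => /andP[_ /eqP].
Qed.

Lemma Aut_fix_gen p : p \in Aut G -> {in A, p =1 id} -> p = 1.
Proof.
move=> AutGp pA; apply: (eq_Aut AutGp (group1 _)) => x Gx.
by rewrite perm1 (morphic_fix_gen (morphicP (Aut_morphic AutGp))).
Qed.

Lemma Aut_morphM p : p \in Aut G -> {in G &, {morph p : x y / x * y}}.
Proof. by move/Aut_morphic/morphicP. Qed.

Lemma Aut_morphV p : p \in Aut G -> {in G, {morph p : x / x^-1}}.
Proof. by move=> AutGp x Gx; rewrite -(autmE AutGp) morphV. Qed.

Lemma Aut_of_iter_fix (phi : {morphism G >-> gT}) m :
    {in A, forall x, phi x \in G} -> {in A, forall x, iter m.+1 phi x = x} ->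
  exists2 p : {perm gT}, p \in Aut G & {in G, p =1 phi} /\ p ^+ m.+1 = 1.
Proof.
move=> phiA iterA.
have phiG : {in G, forall x, phi x \in G}.
  have /subsetP sGpre : G \subset phi @*^-1 G.
    rewrite {1}genG gen_subG; apply/subsetP => x Ax; apply/morphpreP.
    by rewrite phiA // genG mem_gen.
  by move=> x /sGpre/morphpreP[].
have iterG j : {in G, forall x, iter j phi x \in G}.
  by elim: j => [|j IHj] x Gx //=; apply/phiG/IHj.
have iterM j : {in G &, {morph iter j phi : x y / x * y}}.
  by elim: j => [|j IHj] x y Gx Gy //=; rewrite IHj // morphM ?iterG.
have iter_id := morphic_fix_gen (iterM m.+1) iterA.
have inj_phi : 'injm phi.
  apply/injmP => x y Gx Gy eq_phi.
  by rewrite -(iter_id x Gx) -(iter_id y Gy) !iterSr eq_phi.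
have im_phi : phi @* G = G.
  apply/eqP; rewrite eqEcard card_injm // leqnn andbT.
  by apply/subsetP => _ /morphimP[x _ Gx ->]; apply: phiG.
exists (aut inj_phi im_phi); first exact: Aut_aut.
split; first exact: autE.
apply: Aut_fix_gen; first by rewrite groupX ?Aut_aut.
move=> x Ax; rewrite permX -[RHS](iterA x Ax).
have Gx : x \in G by rewrite genG mem_gen.
by elim: m.+1 => [|j IHj] //=; rewrite IHj autE ?iterG.
Qed.

End AutomorphismsOfGeneratedGroup.

(** * The images of the generators under sigma and rho *)

Section ImageRelations.
Variables (gT : finGroupType) (n : nat) (s : 'I_n -> 'F_2) (k : 'I_n -> 'I_n -> 'F_2)
  (a : 'I_n -> 'I_n -> 'I_n -> 'F_2) (g f h : 'I_n -> gT) (u v : gT).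
Hypothesis rels : G_rels s k a g f h u v.

Let gX2 i : g i ^+ 2 = u ^+ ex (s i). Proof. by case: rels => [[]]. Qed.
Let fX2 i : f i ^+ 2 = v ^+ ex (s i). Proof. by case: rels => [[]]. Qed.
Let hX2 i : h i ^+ 2 = 1. Proof. by case: rels => _ []. Qed.
Let uX2 : u ^+ 2 = 1. Proof. by case: rels => _ [_ []]. Qed.
Let vX2 : v ^+ 2 = 1. Proof. by case: rels => _ [_ []]. Qed.
Let comm_gg i j : [~ g i, g j] = u ^+ ex (k i j). Proof. by case: rels => _ _ []. Qed.
Let comm_ff i j : [~ f i, f j] = v ^+ ex (k i j). Proof. by case: rels => _ _ [_ []]. Qed.
Let comm_gf i j :
  [~ g i, f j] = (u * v) ^+ ex (k i j) * \prod_(l < n) h l ^+ ex (a i j l).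
Proof. by case: rels => _ _ [_ []]. Qed.
Let comm_gh i j : [~ g i, h j] = u ^+ (i == j). Proof. by case: rels => _ _ _ []. Qed.
Let comm_fh i j : [~ f i, h j] = v ^+ (i == j). Proof. by case: rels => _ _ _ []. Qed.
Let central_uv i := let: And5 _ _ _ _ (conj _ c) := rels in c i.
Let ug i : commute u (g i).
Proof. by apply/commute_sym/commgP/eqP; case: (central_uv i). Qed.
Let uf i : commute u (f i).
Proof. by apply/commute_sym/commgP/eqP; case: (central_uv i) => _ []. Qed.
Let uh i : commute u (h i).
Proof. by apply/commute_sym/commgP/eqP; case: (central_uv i) => _ [_ []]. Qed.
Let vg i : commute v (g i).
Proof. by apply/commute_sym/commgP/eqP; case: (central_uv i) => _ [_ [_ []]]. Qed.
Let vf i : commute v (f i).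
Proof. by apply/commute_sym/commgP/eqP; case: (central_uv i) => _ [_ [_ [_ []]]]. Qed.
Let vh i : commute v (h i).
Proof. by apply/commute_sym/commgP/eqP; case: (central_uv i) => _ [_ [_ [_ []]]]. Qed.
Let hh i j : commute (h i) (h j). Proof. by apply/commgP/eqP; case: rels => _ _ _ _ []. Qed.

Local Hint Resolve ug uf uh vg vf vh hh : core.

Lemma commute_uv (i : 'I_n) : commute u v.
Proof.
have <- : [~ g i, h i] = u by rewrite comm_gh eqxx.
by apply/commute_sym/commute_commg.
Qed.

Hypotheses (cuv : commute u v) (k_sym : forall i j, k i j = k j i)
  (k_diag : forall i, k i i = 0%R) (a_sym : forall i j l, a i j l = a j i l)
  (a_diag : forall i l, a i i l = 0%R) (a_xyx : forall i j, a i j i = 0%R)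
  (a_xyy : forall i j, a i j j = 0%R).

Let uvX2 : (u * v) ^+ 2 = 1.
Proof. by rewrite expgMn // uX2 vX2 mulg1. Qed.

Let hprod i j := \prod_(l < n) h l ^+ ex (a i j l).

Let hprodX2 i j : hprod i j ^+ 2 = 1.
Proof. by apply: prod_involutions => [l m | l]; [apply: commuteX2 | apply: involutionX]. Qed.

Let hprodV i j : (hprod i j)^-1 = hprod i j.
Proof. exact/invg_involution/hprodX2. Qed.

Let hprod_sym i j : hprod i j = hprod j i.
Proof. by apply: eq_bigr => l _; rewrite a_sym. Qed.

Let hprod_diag i : hprod i i = 1.
Proof. by apply: big1 => l _; rewrite a_diag expg0. Qed.

Let u_hprod i j : commute u (hprod i j).
Proof. by apply: commute_prod => l _; apply: commuteX. Qed.

Let v_hprod i j : commute v (hprod i j).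
Proof. by apply: commute_prod => l _; apply: commuteX. Qed.

Let g_hprod i j m : a i j m = 0%R -> commute (g m) (hprod i j).
Proof.
move=> a0; apply: commute_prod => l _.
have [-> | neq_lm] := eqVneq l m; first by rewrite a0 expg0; apply: commute1.
by apply: commuteX; apply/commgP/eqP; rewrite comm_gh eq_sym (negbTE neq_lm).
Qed.

Let f_hprod i j m : a i j m = 0%R -> commute (f m) (hprod i j).
Proof.
move=> a0; apply: commute_prod => l _.
have [-> | neq_lm] := eqVneq l m; first by rewrite a0 expg0; apply: commute1.
by apply: commuteX; apply/commgP/eqP; rewrite comm_fh eq_sym (negbTE neq_lm).
Qed.

Lemma commute_gf i : commute (g i) (f i).
Proof. by apply/commgP/eqP; rewrite comm_gf k_diag -/(hprod i i) hprod_diag expg0 mulg1. Qed.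

Let comm_fg i j : [~ f i, g j] = (u * v) ^+ ex (k i j) * hprod i j.
Proof.
rewrite -invg_comm comm_gf -/(hprod j i) invMg hprodV hprod_sym k_sym.
by rewrite invg_involution ?involutionX //; apply/commute_sym/commuteXl; apply: commuteMl.
Qed.

Lemma sigma_rels : G_rels s k a f g h v u.
Proof.
split; do !split=> //; try by apply/eqP/commgP/commute_sym.
  by move=> i j; rewrite comm_fg cuv.
by move=> i j; apply/eqP/commgP.
Qed.

Local Notation w i := (g i * f i).

Let u_w i : commute u (w i). Proof. exact: commuteM. Qed.
Let v_w i : commute v (w i). Proof. exact: commuteM. Qed.

Let w_hprod i j : commute (w j) (hprod i j).
Proof. by apply: commuteMl; [apply: g_hprod | apply: f_hprod]; apply: a_xyy. Qed.

Local Hint Resolve u_hprod v_hprod u_w v_w : core.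

Let wX2 i : w i ^+ 2 = (u * v) ^+ ex (s i).
Proof. by rewrite (expgMn _ (commute_gf i)) gX2 fX2 expgMn. Qed.

Let comm_fw i j : [~ f i, w j] = u ^+ ex (k i j) * hprod i j.
Proof.
rewrite commgMJ comm_ff comm_fg conjMg !conjg_commute.
- by rewrite cuv expgMn // -mulgA expg_involutionK.
- exact: commute_sym (f_hprod (a_xyy i j)).
by apply/commuteXl; apply: commuteMl.
Qed.

Let comm_gw i j : [~ g i, w j] = v ^+ ex (k i j) * hprod i j.
Proof.
rewrite (commute_gf j) commgMJ comm_gg comm_gf conjMg !conjg_commute.
- by rewrite expgMn // -mulgA expg_involutionK.
- exact: commute_sym (g_hprod (a_xyy i j)).
by apply/commuteXl; apply: commuteMl.
Qed.

Let comm_ww i j : [~ w i, w j] = (u * v) ^+ ex (k i j).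
Proof.
rewrite (commute_gf i) commMgJ comm_fw comm_gw conjg_commute; last first.
  by apply: commuteMl; [apply: commuteXl | exact: commute_sym (g_hprod (a_xyx i j))].
rewrite -mulgA (mulgA (hprod i j)) -(commuteXl _ (v_hprod i j)) -!mulgA.
by rewrite -[hprod i j * hprod i j]/(hprod i j ^+ 2) hprodX2 mulg1 expgMn.
Qed.

Let comm_wh i j : [~ w i, h j] = (u * v) ^+ (i == j).
Proof. by rewrite commMgJ comm_gh comm_fh conjg_commute ?expgMn //; apply: commuteXl. Qed.

Lemma rho_rels : G_rels s k a f (fun i => (w i)^-1) h v (u * v).
Proof.
split; do !split=> //=;
  try by apply/eqP/commgP/commute_sym; do ?[apply: commuteMl | apply: commuteV].
- by move=> i; rewrite expgVn wX2 invg_involution ?involutionX.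
- move=> i j; have comm_w_wV : [~ w i, (w j)^-1] = ((u * v) ^+ ex (k i j))^-1.
    by rewrite commgV (comm_ww i j) //; apply/commute_sym/commuteXl; apply: commuteMl.
  rewrite commVg comm_w_wV ?invgK //.
  by apply/commuteV/commute_sym/commuteXl; apply: commuteMl.
- move=> i j; rewrite commgV (comm_fw i j); last first.
    by apply/commute_sym; apply: commuteMl; [apply: commuteXl | apply/commute_sym/w_hprod].
  rewrite invMg hprodV invg_involution ?involutionX // -(commuteXl _ (u_hprod i j)).
  by rewrite mulKg_involution.
- move=> i j; rewrite commVg (comm_wh i j) ?invg_involution ?involutionX //.
  by apply/commute_sym/commuteXl; apply: commuteMl.
by move=> i j; apply/eqP/commgP.
Qed.

End ImageRelations.

(** * The presented group *)

Definition maps_gens (aT rT : Type) (n : nat) (p : aT -> rT)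
    (g f h : 'I_n -> aT) (u v : aT) (g' f' h' : 'I_n -> rT) (u' v' : rT) : Prop :=
  [/\ forall i, p (g i) = g' i, forall i, p (f i) = f' i,
      forall i, p (h i) = h' i, p u = u' & p v = v'].

Lemma G_gens_ind (gT : finGroupType) n (g f h : 'I_n -> gT) (u v : gT) (P : gT -> Prop) :
    (forall i, P (g i)) -> (forall i, P (f i)) -> (forall i, P (h i)) -> P u -> P v ->
  {in G_gens g f h u v, forall x, P x}.
Proof.
move=> Pg Pf Ph Pu Pv x; rewrite !inE -!orbA.
by do 3?case/orP => [/imsetP[i _ ->] //|]; case/orP => /eqP->.
Qed.

Section PresentedGroup.
Variables (gT : finGroupType) (G : {group gT}) (n : nat) (s : 'I_n -> 'F_2)
  (k : 'I_n -> 'I_n -> 'F_2) (a : 'I_n -> 'I_n -> 'I_n -> 'F_2)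
  (g f h : 'I_n -> gT) (u v : gT).
Hypothesis presG : presented_G G s k a g f h u v.

Let rels : G_rels s k a g f h u v. Proof. by case: presG. Qed.
Let genG : G = <<G_gens g f h u v>> :> {set gT}. Proof. by case: presG. Qed.
Let lift (hT : finGroupType) g' f' h' (u' v' : hT) :
    G_rels s k a g' f' h' u' v' ->
  exists phi : {morphism G >-> hT}, maps_gens phi g f h u v g' f' h' u' v'.
Proof. by case: presG => _ _; apply. Qed.

Let vX2 : v ^+ 2 = 1. Proof. by case: rels => _ [_ []]. Qed.

Let Gg i : g i \in G. Proof. by rewrite genG mem_gen // !inE imset_f. Qed.
Let Gf i : f i \in G. Proof. by rewrite genG mem_gen // !inE imset_f ?orbT. Qed.
Let Gh i : h i \in G. Proof. by rewrite genG mem_gen // !inE imset_f ?orbT. Qed.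
Let Gu : u \in G. Proof. by rewrite genG mem_gen // !inE eqxx !orbT. Qed.
Let Gv : v \in G. Proof. by rewrite genG mem_gen // !inE eqxx !orbT. Qed.
Local Hint Resolve Gg Gf Gh Gu Gv : core.

(* For n = 0 the presentation is <u, v | u^2, v^2>, the infinite dihedral group,
   which has no finite model: the reflections z |-> -z and z |-> 1 - z of Z/N
   have a product of order N, larger than #|G| for N = #|G| + 1. *)
Lemma presented_G_index_gt0 : 0 < n.
Proof.
rewrite lt0n; apply/eqP => n0; have no_index (i : 'I_n) : False by case: i; rewrite n0.
have [x [y [x2 y2 large_xy]]] := Zp_reflections_product_order (cardG_gt0 G : 1 < #|G|.+1).
have rels_xy : G_rels s k a (fun=> 1) (fun=> 1) (fun=> 1) x y.
  by split; do !split=> // i; case: (no_index i).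
have [phi [_ _ _ phi_u phi_v]] := lift rels_xy.
have : #[x * y] %| #|G|.
  by rewrite -phi_u -phi_v -morphM // (dvdn_trans (morph_order _ _)) ?order_dvdG ?groupM.
by move/(dvdn_leq (cardG_gt0 G)); rewrite leqNgt large_xy.
Qed.

Lemma commute_u_v : commute u v.
Proof. exact: commute_uv rels (Ordinal presented_G_index_gt0). Qed.

Lemma g_neq_f i : g i != f i.
Proof.
apply/eqP => g_eq_f; pose t : {perm bool} := tperm true false.
have rels_t : G_rels s k a (fun=> t) (fun=> 1) (fun=> 1) 1 1.
  have t2 : t ^+ 2 = 1 by apply: tperm2.
  split; do !split=> *; rewrite /= ?t2 ?commgg ?comm1g ?commg1 ?mul1g ?expg1n ?mul1g //.
  by rewrite big1 // => l _; apply: expg1n.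
have [phi [phi_g phi_f _ _ _]] := lift rels_t.
by move/(congr1 phi): g_eq_f; rewrite phi_g phi_f => /permP/(_ true); rewrite perm1 tpermL.
Qed.

Hypotheses (k_sym : forall i j, k i j = k j i) (k_diag : forall i, k i i = 0%R)
  (a_sym : forall i j l, a i j l = a j i l) (a_diag : forall i l, a i i l = 0%R)
  (a_xyx : forall i j, a i j i = 0%R) (a_xyy : forall i j, a i j j = 0%R).

Let Aut_of_rels m g' f' h' (u' v' : gT) :
    G_rels s k a g' f' h' u' v' ->
    (forall phi : {morphism G >-> gT}, maps_gens phi g f h u v g' f' h' u' v' ->
       {in G_gens g f h u v, forall x, phi x \in G /\ iter m.+1 phi x = x}) ->
  exists2 p : {perm gT}, p \in Aut G &
    maps_gens p g f h u v g' f' h' u' v' /\ p ^+ m.+1 = 1.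
Proof.
move=> rels' phi_gens; have [phi phiE] := lift rels'.
have [p AutGp [pE pX]] :
    exists2 p : {perm gT}, p \in Aut G & {in G, p =1 phi} /\ p ^+ m.+1 = 1.
  by apply: (Aut_of_iter_fix genG) => x /(phi_gens phi phiE)[].
exists p => //; split=> //; case: phiE => phi_g phi_f phi_h phi_u phi_v.
by split=> *; rewrite pE.
Qed.

Lemma sigma_aut : exists2 sigma : {perm gT}, sigma \in Aut G &
  maps_gens sigma g f h u v f g h v u /\ sigma ^+ 2 = 1.
Proof.
apply: Aut_of_rels; first exact: sigma_rels rels commute_u_v k_sym a_sym.
move=> phi [phi_g phi_f phi_h phi_u phi_v].
by apply: G_gens_ind => *; rewrite /= ?(phi_g, phi_f, phi_h, phi_u, phi_v).
Qed.

Lemma rho_aut : exists2 rho : {perm gT}, rho \in Aut G &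
  maps_gens rho g f h u v f (fun i => (g i * f i)^-1) h v (u * v) /\ rho ^+ 3 = 1.
Proof.
have cuv := commute_u_v.
apply: Aut_of_rels; first exact: rho_rels rels cuv k_sym k_diag a_sym a_diag a_xyx a_xyy.
move=> phi [phi_g phi_f phi_h phi_u phi_v].
have phi_wV i : phi (g i * f i)^-1 = g i.
  by rewrite morphV ?groupM // morphM // phi_g phi_f invMg invgK mulgK.
have phi_uv : phi (u * v) = u.
  by rewrite morphM // phi_u phi_v mulKg_involution.
apply: G_gens_ind => *;
  by rewrite /= ?(phi_g, phi_f, phi_h, phi_u, phi_v, phi_wV, phi_uv) ?groupV ?groupM.
Qed.

Lemma sigma_rho_involution (sigma rho : {perm gT}) :
    sigma \in Aut G -> rho \in Aut G ->
    maps_gens sigma g f h u v f g h v u ->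
    maps_gens rho g f h u v f (fun i => (g i * f i)^-1) h v (u * v) ->
  (sigma * rho) ^+ 2 = 1.
Proof.
move=> AutGs AutGr [s_g s_f s_h s_u s_v] [r_g r_f r_h r_u r_v].
have [sM sV] := (Aut_morphM AutGs, Aut_morphV AutGs).
have [rM rV] := (Aut_morphM AutGr, Aut_morphV AutGr).
apply: (Aut_fix_gen genG); first by rewrite groupX ?groupM.
apply: G_gens_ind => [i|i|i||]; rewrite /= expgS expg1 !permM.
- rewrite s_g r_f sV ?groupM // sM // s_g s_f rV ?groupM // rM // r_f r_g.
  by rewrite invMg invgK (commute_gf rels k_diag a_diag) mulKg.
- by rewrite s_f r_g s_f r_g.
- by rewrite s_h r_h s_h r_h.
- rewrite s_u r_v sM // s_u s_v -commute_u_v rM // r_u r_v mulKg_involution //.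
  exact: commute_u_v.
- by rewrite s_v r_u s_v r_u.
Qed.

End PresentedGroup.

Theorem mainTheorem5 (V : vectType 'F_2) (sg : V -> 'F_2)
    (ka : V -> V -> 'F_2) (al : V -> V -> V -> 'F_2)
    (n : nat) (b : n.-tuple V)
    (gT : finGroupType) (G : {group gT}) (g f h : 'I_n -> gT) (u v : gT) :
  symplectic_cubic sg ka al ->
  basis_of fullv b ->
  presented_G G (fun i => sg (tnth b i)) (fun i j => ka (tnth b i) (tnth b j))
    (fun i j l => al (tnth b i) (tnth b j) (tnth b l)) g f h u v ->
  exists s r : {perm gT},
    [/\ s \in Aut G /\ r \in Aut G,
        [/\ forall i, s (g i) = f i, forall i, s (f i) = g i,
            forall i, s (h i) = h i, s u = v & s v = u],
        [/\ forall i, r (g i) = f i, forall i, r (f i) = ((g i * f i)^-1)%g,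
            forall i, r (h i) = h i, r u = v & r v = (u * v)%g],
        [/\ (s ^+ 2 = 1)%g, (r ^+ 3 = 1)%g & ((s * r) ^+ 2 = 1)%g] &
        (<<[set s; r]>> \isog [set: 'S_3])%g].
Proof.
move=> scV _ presG.
have k_sym i j := ka_sym scV (tnth b i) (tnth b j).
have k_diag i := ka_diag scV (tnth b i).
have a_sym i j l := al_sym scV (tnth b i) (tnth b j) (tnth b l).
have a_diag i l := al_diag scV (tnth b i) (tnth b l).
have a_xyx i j := al_xyx scV (tnth b i) (tnth b j).
have a_xyy i j := al_xyy scV (tnth b i) (tnth b j).
have [s AutGs [sE s2]] := sigma_aut presG k_sym a_sym.
have [r AutGr [rE r3]] := rho_aut presG k_sym k_diag a_sym a_diag a_xyx a_xyy.
have sr2 := sigma_rho_involution presG k_diag a_diag AutGs AutGr sE rE.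
pose i0 := Ordinal (presented_G_index_gt0 presG).
have [s_neq1 r_neq1] : s != 1 /\ r != 1.
  case: sE rE => s_g _ _ _ _ [r_g _ _ _ _].
  split; apply: contraNneq (g_neq_f presG i0) => p1.
  - by rewrite -[f i0](s_g i0) p1 perm1.
  - by rewrite -[f i0](r_g i0) p1 perm1.
exists s, r; split=> //.
exact: gen_S3_relations_isog.
Qed.
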